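(* Let $a,b\ge1$, $P=[a]\times[b]$, $n=a+b$. For every $f\in(\mathbb R^+)^P$, if $Q(f)=(q_1,q_2,\dots,q_n)$ then $Q(\pi_{\mathcal B}f)=(q_2,q_3,\dots,q_n,q_1)$.
   Context: $[a]\times[b]=\{(i,j)\in\mathbb Z^2:1\le i\le a,\ 1\le j\le b\}$ with the product order. Let $\widehat P=P\cup\{\hat0,\hat1\}$ with $\hat0<x<\hat1$ for all $x\in P$; write $y\lessdot x$ for covering relations; $x^+=\{y\in\widehat P:y\gtrdot x\}$, $x^-=\{y\in\widehat P:y\lessdot x\}$. Each $f:P\to\mathbb R^+$ is extended by $\hat f(\hat0)=\hat f(\hat1)=1$. Parallel sum: $s_1\parallel\cdots\parallel s_m=(1/s_1+\cdots+1/s_m)^{-1}$. The birational toggle $\tau_x$ changes only the value at $x$: $(\tau_xf)(x)=\frac{1}{f(x)}\bigl(\sum_{y\in x^-}\hat f(y)\bigr)\bigl(\|_{y\in x^+}\hat f(y)\bigr)$. The $k$-th file ($1\le k\le n-1$) is $\{(i,j)\in P:j-i+a=k\}$; $\tau^*_k$ is the composition of the toggles over file $k$; birational promotion is $\pi_{\mathcal B}=\tau^*_{n-1}\circ\cdots\circ\tau^*_1$. For $f\in(\mathbb R^+)^P$ let $p_k=\prod_{x\in\text{file }k}f(x)$ for $1\le k\le n-1$, $p_0=p_n=1$, $q_k=p_k/p_{k-1}$ for $1\le k\le n$; $Q(f)=(q_1,\dots,q_n)$. *)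

From HB Require Import structures.
From mathcomp Require Import all_boot all_order all_algebra.
Set Implicit Arguments. Unset Strict Implicit. Unset Printing Implicit Defensive.
Import Order.TTheory GRing.Theory Num.Theory.
Local Open Scope ring_scope.

(* The poset P = [a] x [b]; element (i0, j0) : 'I_a * 'I_b stands for the
   pair (i, j) = (i0 + 1, j0 + 1). *)
Definition grid (a b : nat) : finType := ('I_a * 'I_b)%type.

Definition grid_le (a b : nat) (x y : grid a b) : bool :=
  ((nat_of_ord x.1 <= nat_of_ord y.1)%N && (nat_of_ord x.2 <= nat_of_ord y.2)%N).

(* P-hat = P plus 0-hat and 1-hat, encoded as option (option P):
   None = 0-hat, Some None = 1-hat, Some (Some x) = x. *)
Definition hat (a b : nat) : finType := option (option (grid a b)).
Definition hbot (a b : nat) : hat a b := None.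
Definition htop (a b : nat) : hat a b := Some None.
Definition helt (a b : nat) (x : grid a b) : hat a b := Some (Some x).

Definition hat_le (a b : nat) (u v : hat a b) : bool :=
  match u, v with
  | None, _ => true
  | _, Some None => true
  | Some (Some x), Some (Some y) => grid_le x y
  | _, _ => false
  end.

Definition hat_lt (a b : nat) (u v : hat a b) : bool := hat_le u v && (u != v).

Definition hat_cover (a b : nat) (u v : hat a b) : bool :=
  hat_lt u v && ~~ [exists z : hat a b, hat_lt u z && hat_lt z v].

Definition fhat (R : realFieldType) (a b : nat) (f : grid a b -> R) (u : hat a b) : R :=
  match u with
  | Some (Some x) => f x
  | _ => 1
  end.

Definition toggle (R : realFieldType) (a b : nat) (x : grid a b) (f : grid a b -> R)
  : grid a b -> R :=
  fun z => if z == x then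
     (f x)^-1 * (\sum_(y : hat a b | hat_cover y (helt x)) fhat f y)
              * (\sum_(y : hat a b | hat_cover (helt x) y) (fhat f y)^-1)^-1
   else f z.

Definition in_file (a b : nat) (k : nat) (x : grid a b) : bool :=
  ((nat_of_ord x.2 + a)%N == (k + nat_of_ord x.1)%N).

(* tau*_k : composition of the toggles over file k (they commute) *)
Definition file_toggle (R : realFieldType) (a b : nat) (k : nat) (f : grid a b -> R)
  : grid a b -> R :=
  foldr (fun x g => toggle x g) f (enum [pred x : grid a b | in_file k x]).

Definition bpromotion (R : realFieldType) (a b : nat) (f : grid a b -> R)
  : grid a b -> R :=
  foldl (fun g k => file_toggle k g) f (iota 1 (a + b - 1)).

(* p_k = product of f over file k (this is 1 for k = 0 and k = n, the files
   being empty there) *)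
Definition pfile (R : realFieldType) (a b : nat) (f : grid a b -> R) (k : nat) : R :=
  \prod_(x : grid a b | in_file k x) f x.

Definition qfile (R : realFieldType) (a b : nat) (f : grid a b -> R) (k : nat) : R :=
  pfile f k / pfile f k.-1.

Definition Qvec (R : realFieldType) (a b : nat) (f : grid a b -> R) : seq R :=
  [seq qfile f k | k <- iota 1 (a + b)].

From HB Require Import structures.
From mathcomp Require Import all_boot all_order all_algebra.
From mathcomp Require Import zify ring lra.
Set Implicit Arguments. Unset Strict Implicit. Unset Printing Implicit Defensive.
Import Order.TTheory GRing.Theory Num.Theory.
Local Open Scope ring_scope.

(* A file is a chain whose cells have all their covers in the two neighbouring
   files: the cell of file k in row t covers the cells of file k-1 in row t and
   of file k+1 in row t-1, and is covered by those of file k-1 in row t+1 and of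
   file k+1 in row t.  So the down-sum at row t+1 and the parallel sum of the up
   covers at row t involve the same two values y, z, and y + z = (1/y + 1/z) y z.
   The product over file k of the toggled values therefore telescopes to
   p'_k p_k = p_(k-1) p_(k+1).  Toggling the files 1, ..., n-1 in turn, induction
   gives p'_k = p_(k+1) / p_1 for 0 < k < n, whence q'_k = q_(k+1) for k < n and
   q'_n = p_n / (p_n / p_1) = q_1. *)

Section GridCovers.
Variables a b : nat.
Implicit Types v w x : grid a b.

Definition grid_cover v w : bool :=
  ((v.1.+1 == w.1 :> nat) && (v.2 == w.2 :> nat))
  || ((v.1 == w.1 :> nat) && (v.2.+1 == w.2 :> nat)).

Lemma helt_eqE v w :
  (helt v == helt w) = (v.1 == w.1 :> nat) && (v.2 == w.2 :> nat).
Proof. by case: v w => [v1 v2] [w1 w2]. Qed.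

Lemma hat_lt_heltE v w : hat_lt (helt v) (helt w) =
  [&& (v.1 <= w.1)%N, (v.2 <= w.2)%N & ~~ ((v.1 == w.1 :> nat) && (v.2 == w.2 :> nat))].
Proof. by rewrite /hat_lt /= helt_eqE /grid_le andbA. Qed.

Lemma hat_cover_heltE v w : hat_cover (helt v) (helt w) = grid_cover v w.
Proof.
case: v w => [[v1 hv1] [v2 hv2]] [[w1 hw1] [w2 hw2]].
rewrite /hat_cover /grid_cover hat_lt_heltE /=; apply/idP/idP.
- case/andP=> vw /existsPn noz; apply/negPn/negP => ncov.
  have [lt_vw1|le_wv1] := ltnP v1 w1.
  + have v1S : (v1.+1 < a)%N by lia.
    by move: (noz (helt (Ordinal v1S, Ordinal hv2))); rewrite !hat_lt_heltE /=; lia.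
  + have v2S : (v2.+1 < b)%N by lia.
    by move: (noz (helt (Ordinal hv1, Ordinal v2S))); rewrite !hat_lt_heltE /=; lia.
- move=> cov; apply/andP; split; first by lia.
  apply/existsPn => -[[[[z1 hz1] [z2 hz2]]|]|] //=;
    rewrite ?hat_lt_heltE /= /hat_lt /= ?andbF //; lia.
Qed.

Lemma hat_cover_hbotE x :
  hat_cover (hbot a b) (helt x) = (x.1 == 0 :> nat) && (x.2 == 0 :> nat).
Proof.
case: x => [[x1 hx1] [x2 hx2]]; rewrite /hat_cover /hat_lt /=; apply/idP/idP.
- move=> /existsPn noz; apply/negPn/negP => nx.
  have a_gt0 : (0 < a)%N by lia.
  have b_gt0 : (0 < b)%N by lia.
  by move: (noz (helt (Ordinal a_gt0, Ordinal b_gt0))); rewrite /= helt_eqE /grid_le /=; lia.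
- move=> x0; apply/existsPn => -[[[[z1 hz1] [z2 hz2]]|]|] //=;
    rewrite ?helt_eqE /= ?/grid_le /= ?andbF //; lia.
Qed.

Lemma hat_cover_htopE x :
  hat_cover (helt x) (htop a b) = (x.1.+1 == a) && (x.2.+1 == b).
Proof.
case: x => [[x1 hx1] [x2 hx2]]; rewrite /hat_cover /hat_lt /=; apply/idP/idP.
- move=> /existsPn noz; apply/negPn/negP => nx.
  have a_pred : (a.-1 < a)%N by lia.
  have b_pred : (b.-1 < b)%N by lia.
  by move: (noz (helt (Ordinal a_pred, Ordinal b_pred))); rewrite /= helt_eqE /grid_le /=; lia.
- move=> xtop; apply/existsPn => -[[[[z1 hz1] [z2 hz2]]|]|] //=;
    rewrite ?helt_eqE /= ?/grid_le /= ?andbF //; lia.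
Qed.

Lemma file_no_cover k v w : grid_cover v w -> in_file k v -> in_file k w -> False.
Proof. by rewrite /grid_cover /in_file; lia. Qed.

End GridCovers.

Lemma sum_option (V : nmodType) (T : finType) (F : option T -> V) :
  \sum_(y : option T) F y = F None + \sum_(x : T) F (Some x).
Proof.
rewrite [index_enum _]unlock.
rewrite (_ : Finite.enum _ = None :: [seq Some x | x <- index_enum T]); last first.
  by rewrite [index_enum T]unlock [in LHS]unlock.
by rewrite big_cons big_map.
Qed.

Section Toggles.
Variables (R : realFieldType) (a b : nat).
Implicit Types (g : grid a b -> R) (x w z : grid a b).

Definition down_sum g x : R := \sum_(y : hat a b | hat_cover y (helt x)) fhat g y.
Definition up_invsum g x : R := \sum_(y : hat a b | hat_cover (helt x) y) (fhat g y)^-1.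
Definition toggle_value g x : R := (g x)^-1 * down_sum g x * (up_invsum g x)^-1.

Lemma toggleE x g z : toggle x g z = if z == x then toggle_value g x else g z.
Proof. by []. Qed.

Lemma down_sum_grid g x :
  down_sum g x = (if (x.1 == 0 :> nat) && (x.2 == 0 :> nat) then 1 else 0)
                 + \sum_(w | grid_cover w x) g w.
Proof.
rewrite /down_sum big_mkcond !sum_option /= hat_cover_hbotE add0r.
by rewrite [in RHS]big_mkcond; congr (_ + _); apply: eq_bigr => w _;
  rewrite hat_cover_heltE.
Qed.

Lemma up_invsum_grid g x :
  up_invsum g x = (if (x.1.+1 == a) && (x.2.+1 == b) then 1 else 0)
                  + \sum_(w | grid_cover x w) (g w)^-1.
Proof.
rewrite /up_invsum big_mkcond !sum_option /= hat_cover_htopE invr1 add0r.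
by rewrite [in RHS]big_mkcond; congr (_ + _); apply: eq_bigr => w _;
  rewrite hat_cover_heltE.
Qed.

Lemma down_sum_gt0 g x : (forall w, 0 < g w) -> 0 < down_sum g x.
Proof.
move=> g_gt0; rewrite down_sum_grid.
have sum_ge0 : 0 <= \sum_(w | grid_cover w x) g w by apply: sumr_ge0 => w _; apply/ltW.
case: ifP => [_|x_not0]; first by lra.
suff [w wx] : exists w, grid_cover w x.
  by rewrite add0r (bigD1 w) //=; apply: ltr_pwDl => //; apply: sumr_ge0 => y _; apply/ltW.
case: x {sum_ge0} x_not0 => [[x1 hx1] [x2 hx2]] /=.
case: x1 hx1 => [|x1] hx1 x_not0.
- have x2P : (x2.-1 < b)%N by lia.
  by exists (Ordinal hx1, Ordinal x2P); rewrite /grid_cover /=; lia.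
- have x1P : (x1 < a)%N by lia.
  by exists (Ordinal x1P, Ordinal hx2); rewrite /grid_cover /=; lia.
Qed.

Lemma up_invsum_gt0 g x : (forall w, 0 < g w) -> 0 < up_invsum g x.
Proof.
move=> g_gt0; rewrite up_invsum_grid.
have sum_ge0 : 0 <= \sum_(w | grid_cover x w) (g w)^-1.
  by apply: sumr_ge0 => w _; rewrite invr_ge0; apply/ltW.
case: ifP => [_|x_not_top]; first by lra.
suff [w xw] : exists w, grid_cover x w.
  rewrite add0r (bigD1 w) //=; apply: ltr_pwDl; first by rewrite invr_gt0.
  by apply: sumr_ge0 => y _; rewrite invr_ge0; apply/ltW.
case: x {sum_ge0} x_not_top => [[x1 hx1] [x2 hx2]] /= x_not_top.
have [x1S|x1_last] := ltnP x1.+1 a.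
- by exists (Ordinal x1S, Ordinal hx2); rewrite /grid_cover /=; lia.
- have x2S : (x2.+1 < b)%N by lia.
  by exists (Ordinal hx1, Ordinal x2S); rewrite /grid_cover /=; lia.
Qed.

Lemma toggle_value_gt0 g x : (forall w, 0 < g w) -> 0 < toggle_value g x.
Proof.
move=> g_gt0; rewrite /toggle_value !mulr_gt0 ?invr_gt0 //.
- exact: down_sum_gt0.
- exact: up_invsum_gt0.
Qed.

Lemma foldr_toggle k g (s : seq (grid a b)) z :
  uniq s -> all (in_file k) s ->
  foldr (fun x h => toggle x h) g s z = if z \in s then toggle_value g z else g z.
Proof.
elim: s z => [|x s IHs] //= z /andP [x_notin_s uniq_s] /andP [file_x file_s].
have fixes_off_file w : ~~ in_file k w -> foldr (fun x h => toggle x h) g s w = g w.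
  move=> w_off; rewrite IHs //; case: ifP => // w_in_s.
  by move/allP: file_s => /(_ w w_in_s); rewrite (negbTE w_off).
rewrite toggleE in_cons; case: (eqVneq z x) => [->|_]; last exact: IHs.
rewrite /toggle_value; congr (_ * _ * (_)^-1).
- by rewrite IHs // (negbTE x_notin_s).
- rewrite !down_sum_grid; congr (_ + _); apply: eq_bigr => w wx.
  by rewrite fixes_off_file //; apply/negP => file_w; exact: file_no_cover wx file_w file_x.
- rewrite !up_invsum_grid; congr (_ + _); apply: eq_bigr => w xw.
  by rewrite fixes_off_file //; apply/negP; exact: file_no_cover xw file_x.
Qed.

Lemma file_toggleE k g z :
  file_toggle k g z = if in_file k z then toggle_value g z else g z.
Proof.
rewrite /file_toggle (@foldr_toggle k) ?enum_uniq ?mem_enum //.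
by apply/allP => x; rewrite mem_enum.
Qed.

Lemma file_toggle_gt0 k g : (forall w, 0 < g w) -> forall w, 0 < file_toggle k g w.
Proof. by move=> g_gt0 w; rewrite file_toggleE; case: ifP => _; [exact: toggle_value_gt0|]. Qed.

Lemma pfile_file_toggle_other k k' g : k' != k -> pfile (file_toggle k g) k' = pfile g k'.
Proof.
move=> k'k; apply: eq_bigr => x x_in_k'.
by rewrite file_toggleE; case: ifP => // x_in_k; move: x_in_k' x_in_k k'k; rewrite /in_file; lia.
Qed.

Lemma pfile0 g : pfile g 0 = 1.
Proof. by rewrite /pfile big_pred0 // => x; rewrite /in_file; have := ltn_ord x.1; lia. Qed.

Lemma pfile_gt0 g k : (forall w, 0 < g w) -> 0 < pfile g k.
Proof. by move=> g_gt0; apply: prodr_gt0 => x _. Qed.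

End Toggles.

Lemma big_nat_supp (T : Type) (idx : T) (op : Monoid.law idx) (F : nat -> T) m n N :
  (m <= n <= N)%N -> (forall t, (t < N)%N -> ~~ (m <= t < n)%N -> F t = idx) ->
  \big[op/idx]_(0 <= t < N) F t = \big[op/idx]_(m <= t < n) F t.
Proof.
move=> /andP[mn nN] F_idx.
rewrite (big_cat_nat (leq0n m) (leq_trans mn nN)) (big_cat_nat mn nN).
have below : \big[op/idx]_(0 <= t < m) F t = idx.
  by apply: big1_seq => t /andP[_]; rewrite mem_index_iota => ?; apply: F_idx; lia.
have above : \big[op/idx]_(n <= t < N) F t = idx.
  by apply: big1_seq => t /andP[_]; rewrite mem_index_iota => ?; apply: F_idx; lia.
by rewrite below above Monoid.mul1m Monoid.mulm1.
Qed.

Lemma prod_ratio_telescope (R : fieldType) (L U c : nat -> R) lo hi : (lo <= hi)%N ->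
  (forall t, (lo <= t < hi)%N -> L t.+1 = U t * c t) ->
  (forall t, (lo <= t <= hi)%N -> U t != 0) ->
  \prod_(lo <= t < hi.+1) (L t / U t) = L lo * \prod_(lo <= t < hi) c t / U hi.
Proof.
move=> lo_hi; rewrite -(subnK lo_hi); elim: (hi - lo)%N => [|d IHd] L_next U_neq0.
  by rewrite add0n big_nat1 big_geq ?mulr1.
rewrite big_nat_recr /= ?IHd; last 3 first.
- by move=> t ?; apply: L_next; lia.
- by move=> t ?; apply: U_neq0; lia.
- by lia.
rewrite !addSn big_nat_recr /= ?L_next; [|lia|lia].
have U_d : U (d + lo)%N != 0 by apply: U_neq0; lia.
have U_dS : U (d + lo).+1 != 0 by apply: U_neq0; lia.
by field; apply/andP.
Qed.

Lemma addr_parallel (R : fieldType) (y z : R) :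
  y != 0 -> z != 0 -> y + z = (y^-1 + z^-1) * (y * z).
Proof. by move=> y0 z0; field; apply/andP. Qed.

Section Cells.
Variables (R : realFieldType) (a b : nat).
Local Notation A := a.+1.
Local Notation B := b.+1.
Implicit Types (g : grid A B -> R) (x w : grid A B).

(* Cells in the 1-based coordinates of the paper, so that the neighbours
   (i - 1, j) and (i, j - 1) can be written in nat; [entry d g i j] is d off the
   grid (d = 0 in sums over covers, d = 1 in products over files). *)
Definition in_grid (i j : nat) : bool := (0 < i <= A)%N && (0 < j <= B)%N.
Definition cell (i j : nat) : grid A B := (inord i.-1, inord j.-1).
Definition entry (d : R) g (i j : nat) : R := if in_grid i j then g (cell i j) else d.

Lemma cell1 i j : in_grid i j -> (cell i j).1 = i.-1 :> nat.
Proof. by rewrite /in_grid /= => ij; rewrite inordK //; lia. Qed.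

Lemma cell2 i j : in_grid i j -> (cell i j).2 = j.-1 :> nat.
Proof. by rewrite /in_grid /= => ij; rewrite inordK //; lia. Qed.

Lemma sum_grid_at (F : R -> R) g i j : F 0 = 0 ->
  \sum_(w : grid A B | (w.1.+1 == i :> nat) && (w.2.+1 == j :> nat)) F (g w) = F (entry 0 g i j).
Proof.
move=> F0; rewrite /entry; case: ifP => ij.
  rewrite (big_pred1 (cell i j)) // => -[w1 w2].
  by rewrite /= /cell xpair_eqE -!val_eqE /= !inordK; move: ij; rewrite /in_grid; lia.
rewrite big_pred0 // => -[[w1 hw1] [w2 hw2]] /=; move: ij; rewrite /in_grid; lia.
Qed.

Lemma down_sum_cell g i j : in_grid i j ->
  down_sum g (cell i j)
  = (if (i == 1)%N && (j == 1)%N then 1 else 0) + entry 0 g i.-1 j + entry 0 g i j.-1.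
Proof.
move=> ij; rewrite down_sum_grid cell1 // cell2 // -addrA; congr (_ + _).
  by move: ij; rewrite /in_grid; case: ifP; case: ifP => //; lia.
rewrite (bigID (fun w : grid A B => (w.1.+1 == i.-1 :> nat) && (w.2.+1 == j :> nat))) /=.
rewrite -[entry 0 g i.-1 j](sum_grid_at (F:=id)) // -[entry 0 g i j.-1](sum_grid_at (F:=id)) //.
by congr (_ + _); apply: eq_bigl => -[w1 w2];
  rewrite /grid_cover cell1 // cell2 //=; move: ij; rewrite /in_grid; lia.
Qed.

(* Missing upper covers drop out because 0^-1 = 0. *)
Lemma up_invsum_cell g i j : in_grid i j ->
  up_invsum g (cell i j)
  = (if (i == A) && (j == B) then 1 else 0) + (entry 0 g i.+1 j)^-1 + (entry 0 g i j.+1)^-1.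
Proof.
move=> ij; rewrite up_invsum_grid cell1 // cell2 // -addrA; congr (_ + _).
  by move: ij; rewrite /in_grid; case: ifP; case: ifP => //; lia.
rewrite (bigID (fun w : grid A B => (w.1.+1 == i.+1 :> nat) && (w.2.+1 == j :> nat))) /=.
rewrite -(sum_grid_at (F:=GRing.inv) g i.+1) ?invr0 // -(sum_grid_at (F:=GRing.inv) g i) ?invr0 //.
by congr (_ + _); apply: eq_bigl => -[w1 w2];
  rewrite /grid_cover cell1 // cell2 //=; move: ij; rewrite /in_grid; lia.
Qed.

Lemma prod_file_rows (F : grid A B -> R) k N : (A < N)%N ->
  \prod_(x | in_file k x) F x
  = \prod_(0 <= t < N) (if in_grid t (t + k - A) then F (cell t (t + k - A)) else 1).
Proof.
move=> AN; rewrite (big_cat_nat _ (n := A.+1)) /=; [|by []|by []].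
rewrite [X in _ * X]big1_seq ?mulr1; last first.
  by move=> t /andP[_]; rewrite mem_index_iota /in_grid => tA; case: ifP => //; lia.
rewrite big_nat_recl // mul1r big_mkord.
transitivity (\prod_(i < A) \prod_(j < B | in_file k (i, j)) F (i, j)).
  by rewrite pair_big_dep; apply: eq_big => -[i j].
apply: eq_bigr => i _; case: ifP => i_in.
  have jB : (i + k - A < B)%N by move: i_in; rewrite /in_grid; lia.
  rewrite (big_pred1 (Ordinal jB)) => [|j]; last first.
    by rewrite /in_file /= -val_eqE /=; move: i_in; rewrite /in_grid; lia.
  congr F; congr pair; apply: val_inj; rewrite /= inordK //; move: i_in; rewrite /in_grid; lia.
rewrite big_pred0 // => j; rewrite /in_file /=.
by have := ltn_ord j; have := ltn_ord i; move: i_in; rewrite /in_grid; lia.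
Qed.

Lemma pfile_rows g k N : (A < N)%N -> pfile g k = \prod_(0 <= t < N) entry 1 g t (t + k - A).
Proof. by move=> AN; rewrite /pfile (prod_file_rows _ _ AN). Qed.

Section FileProduct.
Variables (g : grid A B -> R) (k : nat).
Hypotheses (g_gt0 : forall x, 0 < g x) (k_gt0 : (0 < k)%N) (k_lt_n : (k < A + B)%N).

(* File k occupies the cells (t, col t) of the rows lo <= t <= hi; [d t] and
   [u t] are the entries of files k - 1 and k + 1 in row t. *)
Local Notation col t := (t + k - A)%N.
Local Notation lo := (A - k).+1.
Local Notation hi := (minn A (A + B - k)).
Local Notation L t := (down_sum g (cell t (col t))).
Local Notation U t := (up_invsum g (cell t (col t))).
Local Notation d t := (entry 1 g t (t + k.-1 - A)).
Local Notation u t := (entry 1 g t (t + k.+1 - A)).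

Lemma in_grid_file t : in_grid t (col t) = (lo <= t <= hi)%N.
Proof. by rewrite /in_grid; lia. Qed.

Lemma down_sum_first_row : L lo = d lo * u lo.-1.
Proof.
rewrite down_sum_cell ?in_grid_file; last by lia.
rewrite (_ : lo + k.-1 - A = (col lo).-1)%N; last by lia.
rewrite (_ : lo.-1 + k.+1 - A = col lo)%N; last by lia.
rewrite /entry; case: ifP => corner; case: ifP => in1; case: ifP => in2;
  rewrite ?mul1r ?mulr1 ?add0r ?addr0 //; exfalso; move: corner in1 in2; rewrite /in_grid; lia.
Qed.

Lemma down_sum_next_row t : (lo <= t < hi)%N -> L t.+1 = U t * (d t.+1 * u t).
Proof.
move=> t_row.
rewrite down_sum_cell ?up_invsum_cell ?in_grid_file; [|lia|lia].
rewrite !ifF; [|lia|lia].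
have in1 : in_grid t.+1 (col t) by rewrite /in_grid; lia.
have in2 : in_grid t (col t).+1 by rewrite /in_grid; lia.
rewrite (_ : col t.+1 = (col t).+1) ?succnK; last by lia.
rewrite (_ : t.+1 + k.-1 - A = col t)%N; last by lia.
rewrite (_ : t + k.+1 - A = (col t).+1)%N; last by lia.
rewrite /entry in1 in2 !add0r addrC.
by apply: addr_parallel; apply/lt0r_neq0/g_gt0.
Qed.

Lemma up_invsum_last_row : U hi * (d hi.+1 * u hi) = 1.
Proof.
rewrite up_invsum_cell ?in_grid_file; last by lia.
rewrite (_ : hi.+1 + k.-1 - A = col hi)%N; last by lia.
rewrite (_ : hi + k.+1 - A = (col hi).+1)%N; last by lia.
have g_neq0 x : g x != 0 by apply/lt0r_neq0.
rewrite /entry /in_grid; repeat case: ifP => ?;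
  rewrite ?invr0 ?invr1 ?add0r ?addr0 ?mul1r ?mulr1 ?mulVf //; exfalso; lia.
Qed.

Lemma prod_down_up_file :
  \prod_(x | in_file k x) (down_sum g x / up_invsum g x) = pfile g k.-1 * pfile g k.+1.
Proof.
have U_neq0 t : U t != 0 by apply/lt0r_neq0/up_invsum_gt0.
have U_hi_inv : (U hi)^-1 = d hi.+1 * u hi.
  by apply: (mulfI (U_neq0 hi)); rewrite mulfV // up_invsum_last_row.
rewrite (prod_file_rows _ _ (leqnSn A.+1)) (big_nat_supp _ (m := lo) (n := hi.+1)); last 2 first.
- by lia.
- by move=> t _ t_out; rewrite in_grid_file ifF //; lia.
rewrite (eq_big_nat _ _ (F2 := fun t => L t / U t)); last first.
  by move=> t t_row; rewrite in_grid_file ifT //; lia.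
rewrite (prod_ratio_telescope (c := fun t => d t.+1 * u t));
  [|lia|exact: down_sum_next_row|by move=> t _].
rewrite !(pfile_rows _ _ (leqnSn A.+1)).
rewrite (big_nat_supp _ (m := lo) (n := hi.+2)); last 2 first.
- by lia.
- by move=> t _ t_out; rewrite /entry ifF //; rewrite /in_grid; lia.
rewrite (big_nat_supp _ (m := lo.-1) (n := hi.+1)); last 2 first.
- by lia.
- by move=> t _ t_out; rewrite /entry ifF //; rewrite /in_grid; lia.
have prod_d : \prod_(lo <= t < hi.+2) d t = d lo * \prod_(lo <= t < hi) d t.+1 * d hi.+1.
  rewrite big_ltn; last by lia.
  by rewrite big_nat_recr ?big_add1 ?mulrA //=; lia.
have prod_u : \prod_(lo.-1 <= t < hi.+1) u t = u lo.-1 * \prod_(lo <= t < hi) u t * u hi.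
  rewrite big_ltn; last by lia.
  by rewrite big_nat_recr ?mulrA //=; lia.
rewrite prod_d prod_u big_split /= -mulrA U_hi_inv down_sum_first_row; ring.
Qed.

Lemma pfile_file_toggle :
  pfile (file_toggle k g) k * pfile g k = pfile g k.-1 * pfile g k.+1.
Proof.
rewrite -prod_down_up_file /pfile -big_split /=; apply: eq_bigr => x x_in_k.
rewrite file_toggleE x_in_k /toggle_value mulrC !mulrA mulfV ?mul1r //.
exact/lt0r_neq0/g_gt0.
Qed.

End FileProduct.

End Cells.

Lemma map_iota_rot1 (T : Type) (q q' : nat -> T) n :
  (forall k, (0 < k <= n)%N -> q' k = q k.+1) -> q' n.+1 = q 1%N ->
  map q' (iota 1 n.+1) = rot 1 (map q (iota 1 n.+1)).
Proof.
move=> q'_shift q'_last.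
have iotaS : iota 1 n.+1 = rcons (iota 1 n) n.+1.
  by rewrite -cats1 -[in LHS](addn1 n) iotaD add1n.
rewrite [in LHS]iotaS map_rcons q'_last /= rot1_cons; congr rcons.
rewrite -[2%N]/(1 + 1)%N iotaDl -map_comp; apply/eq_in_map => k.
by rewrite mem_iota => k_in /=; rewrite q'_shift ?add1n //; lia.
Qed.

Section Promotion.
Variables (R : realFieldType) (a b : nat).
Local Notation A := a.+1.
Local Notation B := b.+1.
Variable f : grid A B -> R.
Hypothesis f_gt0 : forall x, 0 < f x.

Definition promote_upto m : grid A B -> R :=
  foldl (fun g k => file_toggle k g) f (iota 1 m).

Lemma promote_uptoS m : promote_upto m.+1 = file_toggle m.+1 (promote_upto m).
Proof. by rewrite /promote_upto -[in LHS](addn1 m) iotaD foldl_cat add1n. Qed.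

Lemma promote_upto_gt0 m x : 0 < promote_upto m x.
Proof.
elim: m x => [|m IHm] x; first exact: f_gt0.
by rewrite promote_uptoS; apply: file_toggle_gt0.
Qed.

Lemma pfile_promote_upto m k : (m < A + B)%N ->
  pfile (promote_upto m) k = if (0 < k <= m)%N then pfile f k.+1 / pfile f 1 else pfile f k.
Proof.
have pf_neq0 j : pfile f j != 0 by apply/lt0r_neq0/pfile_gt0.
elim: m k => [|m IHm] k m_lt; first by case: ifP => //; lia.
rewrite promote_uptoS; have [->|k_ne] := eqVneq k m.+1; last first.
  by rewrite pfile_file_toggle_other // IHm; [case: ifP; case: ifP => //; lia | lia].
have P_m1 : pfile (promote_upto m) m.+1 = pfile f m.+1 by rewrite IHm ?ifF //; lia.
apply: (mulIf (pf_neq0 m.+1)); rewrite ifT; last by lia.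
rewrite -[in LHS]P_m1 (pfile_file_toggle (promote_upto_gt0 m)) //.
rewrite [pfile _ m.+2]IHm ?ifF; [|lia|lia].
case: m IHm {P_m1} m_lt => [|m] IHm m_lt /=; first by rewrite pfile0 mul1r divfK.
by rewrite IHm ?ifT; [field|lia|lia].
Qed.

Lemma qfile_bpromotion k : (0 < k < A + B)%N -> qfile (bpromotion f) k = qfile f k.+1.
Proof.
move=> k_in; have pf_neq0 j : pfile f j != 0 by apply/lt0r_neq0/pfile_gt0.
rewrite /qfile -[bpromotion f]/(promote_upto (A + B - 1)) !pfile_promote_upto; [|lia|lia].
rewrite ifT; last by lia.
case: k k_in => [|[|k]] k_in //=; first by rewrite pfile0 divr1.
by rewrite ifT; [field; rewrite !pf_neq0|lia].
Qed.

Lemma qfile_bpromotion_last : qfile (bpromotion f) (A + B) = qfile f 1.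
Proof.
have pf_neq0 j : pfile f j != 0 by apply/lt0r_neq0/pfile_gt0.
rewrite /qfile -[bpromotion f]/(promote_upto (A + B - 1)) !pfile_promote_upto; [|lia|lia].
by rewrite ifF ?ifT /= ?pfile0; [field; rewrite !pf_neq0|lia|lia].
Qed.

Lemma Qvec_bpromotion : Qvec (bpromotion f) = rot 1 (Qvec f).
Proof.
rewrite /Qvec addSn; apply: map_iota_rot1; first by move=> k k_in; apply: qfile_bpromotion; lia.
by rewrite -addSn qfile_bpromotion_last.
Qed.

End Promotion.

Theorem corollary7 (R : realFieldType) (a b : nat) (ha : (1 <= a)%N) (hb : (1 <= b)%N)
  (f : grid a b -> R) (hf : forall x, 0 < f x) :
  Qvec (bpromotion f) = rot 1 (Qvec f).
Proof.
case: a ha f hf => [|a] // _; case: b hb => [|b] // _ f hf.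
exact: Qvec_bpromotion.
Qed.
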